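(* Fix $L>0$ and define $$\Delta_n(FP-ES;L)=\max_{T\in RB(n)}\max_{i\in[n]}\sup_{l>0:\ \sum_e l(e)=L}\{FP_T(i)-ES_T(i)\},$$ and $\Delta_n(ES-FP;L)$ analogously with $ES_T(i)-FP_T(i)$. The suprema run over strictly positive edge-length assignments with total length $L$. (i) For $n\ge 2$, $\Delta_n(FP-ES;L)=\lambda_n L$, where $\lambda_n=0$ for $n=2,3$, $\lambda_4=\tfrac1{12}$, $\lambda_5=\tfrac18$, and $\lambda_n=\tfrac{11}{80}$ for $n\ge 6$. For $n\ge 3$, $\Delta_n(ES-FP;L)=\left(\tfrac12-\tfrac1{n-1}\right)L$. (ii) If the suprema are restricted to positive edge-length assignments with total length $L$ that also satisfy (MC), then the same formulas hold with $L$ replaced by $L/2$. That is, $\Delta_n(FP-ES;L)=\lambda_n L/2$ for $n\ge2$, and $\Delta_n(ES-FP;L)=\left(\tfrac12-\tfrac1{n-1}\right)L/2$ for $n\ge 3$.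
   Context: $RB(n)$ is the set of rooted binary phylogenetic trees with leaf set $[n]=\{1,\dots,n\}$: rooted trees in which every non-leaf vertex has out-degree exactly 2, leaves labelled bijectively by $[n]$, identified up to label-preserving isomorphism. Each edge has length $l(e)>0$, and $n(e)$ is the number of leaves descended from $e$. $FP_T(i)=\sum_{e\in P(T;\rho,i)} l(e)/n(e)$ and $ES_T(i)=\sum_{e\in P(T;\rho,i)} l(e)/2^{k(e,i)}$, where $P(T;\rho,i)$ is the root-to-$i$ path and $k(e,i)$ is the number of edges strictly between $e$ and $i$ on that path. (MC): all root-to-leaf path lengths are equal. *)

From Stdlib Require Import Reals List Permutation Arith.
Import ListNotations.
Open Scope R_scope.

(* A [Node l1 t1 l2 t2]
   is an internal vertex with two children t1, t2; [l1] (resp. [l2]) is the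
   length of the edge from this vertex to the root of t1 (resp. t2).
   The root has no incoming edge. *)
Inductive ltree : Type :=
| Leaf : nat -> ltree
| Node : R -> ltree -> R -> ltree -> ltree.

Fixpoint leaves (t : ltree) : list nat :=
  match t with
  | Leaf k => [k]
  | Node _ t1 _ t2 => leaves t1 ++ leaves t2
  end.

(* n(e) for the edge above subtree t *)
Definition nleaves (t : ltree) : nat := length (leaves t).

Definition memb (i : nat) (t : ltree) : bool := existsb (Nat.eqb i) (leaves t).

Definition leaf_set_is (n : nat) (t : ltree) : Prop :=
  Permutation (leaves t) (seq 1 n).

Fixpoint pos_lengths (t : ltree) : Prop :=
  match t with
  | Leaf _ => True
  | Node l1 t1 l2 t2 => 0 < l1 /\ pos_lengths t1 /\ 0 < l2 /\ pos_lengths t2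
  end.

Fixpoint total_length (t : ltree) : R :=
  match t with
  | Leaf _ => 0
  | Node l1 t1 l2 t2 => l1 + total_length t1 + l2 + total_length t2
  end.

Fixpoint depth (t : ltree) (i : nat) : nat :=
  match t with
  | Leaf _ => 0
  | Node _ t1 _ t2 =>
      if memb i t1 then S (depth t1 i)
      else if memb i t2 then S (depth t2 i) else 0
  end.

Fixpoint path_length (t : ltree) (i : nat) : R :=
  match t with
  | Leaf _ => 0
  | Node l1 t1 l2 t2 =>
      if memb i t1 then l1 + path_length t1 i
      else if memb i t2 then l2 + path_length t2 i else 0
  end.

Fixpoint FP (t : ltree) (i : nat) : R :=
  match t with
  | Leaf _ => 0
  | Node l1 t1 l2 t2 =>
      if memb i t1 then l1 / INR (nleaves t1) + FP t1 i
      else if memb i t2 then l2 / INR (nleaves t2) + FP t2 i else 0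
  end.

(* Equal splits index: sum over root-to-i edges of l(e)/2^k(e,i),
   k(e,i) = number of edges strictly between e and i, i.e. the depth of i
   in the subtree below e. *)
Fixpoint ES (t : ltree) (i : nat) : R :=
  match t with
  | Leaf _ => 0
  | Node l1 t1 l2 t2 =>
      if memb i t1 then l1 / 2 ^ (depth t1 i) + ES t1 i
      else if memb i t2 then l2 / 2 ^ (depth t2 i) + ES t2 i else 0
  end.

Definition MC (t : ltree) : Prop :=
  forall i j, In i (leaves t) -> In j (leaves t) -> path_length t i = path_length t j.

Definition values (f : ltree -> nat -> R) (mc : bool) (n : nat) (L : R) (x : R) : Prop :=
  exists (t : ltree) (i : nat),
    leaf_set_is n t /\ In i (seq 1 n) /\ pos_lengths t /\ total_length t = L /\
    (if mc then MC t else True) /\ x = f t i.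

Definition FPminusES (t : ltree) (i : nat) : R := FP t i - ES t i.
Definition ESminusFP (t : ltree) (i : nat) : R := ES t i - FP t i.

Definition lambda (n : nat) : R :=
  match n with
  | 0 | 1 | 2 | 3 => 0
  | 4 => 1 / 12
  | 5 => 1 / 8
  | _ => 11 / 80
  end.

From Stdlib Require Import Reals List Bool Lra Lia Permutation.
Open Scope R_scope.

(* Along the root-to-i path, FP_T(i) - ES_T(i) is the sum of l(e) (1/n(e) - 1/2^k(e,i)),
   where k(e,i) < n(e) < n, and k(e,i) = 0 only when n(e) = 1.  Each such coefficient is
   at most max_(k <= n-2) (1/(k+1) - 1/2^k) = lambda_n, and the coefficients of
   ES_T(i) - FP_T(i) are at most 1/2 - 1/(n-1); so both differences are bounded by the
   constant times the path length, which is at most L, and at most L/2 under (MC) since a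
   leaf on the other side of the root is equally far from it.  The bounds are approached by
   caterpillars with tiny edges, hung below a single long edge whose coefficient is maximal. *)

Fixpoint path_sum (g : nat -> nat -> R) (t : ltree) (i : nat) : R :=
  match t with
  | Leaf _ => 0
  | Node l1 t1 l2 t2 =>
      if memb i t1 then l1 * g (depth t1 i) (nleaves t1) + path_sum g t1 i
      else if memb i t2 then l2 * g (depth t2 i) (nleaves t2) + path_sum g t2 i
      else 0
  end.

Definition fp_es_coef (k m : nat) : R := 1 / INR m - 1 / 2 ^ k.
Definition es_fp_coef (k m : nat) : R := 1 / 2 ^ k - 1 / INR m.

Lemma FPminusES_path_sum t i : FPminusES t i = path_sum fp_es_coef t i.
Proof.
  unfold FPminusES, fp_es_coef.
  induction t as [a|l1 t1 IH1 l2 t2 IH2]; simpl; [lra|].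
  destruct (memb i t1); [rewrite <- IH1; unfold Rdiv; ring|].
  destruct (memb i t2); [rewrite <- IH2; unfold Rdiv; ring|lra].
Qed.

Lemma ESminusFP_path_sum t i : ESminusFP t i = path_sum es_fp_coef t i.
Proof.
  unfold ESminusFP, es_fp_coef.
  induction t as [a|l1 t1 IH1 l2 t2 IH2]; simpl; [lra|].
  destruct (memb i t1); [rewrite <- IH1; unfold Rdiv; ring|].
  destruct (memb i t2); [rewrite <- IH2; unfold Rdiv; ring|lra].
Qed.

Lemma memb_true_iff i t : memb i t = true <-> In i (leaves t).
Proof.
  unfold memb. rewrite existsb_exists. split.
  - intros [x [Hx E]]. apply Nat.eqb_eq in E. subst. exact Hx.
  - intros H. exists i. split; [exact H | apply Nat.eqb_refl].
Qed.

Lemma memb_Node i l1 t1 l2 t2 :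
  memb i (Node l1 t1 l2 t2) = (memb i t1 || memb i t2)%bool.
Proof. apply existsb_app. Qed.

Lemma nleaves_Node l1 t1 l2 t2 :
  nleaves (Node l1 t1 l2 t2) = (nleaves t1 + nleaves t2)%nat.
Proof. apply length_app. Qed.

Lemma nleaves_pos t : (0 < nleaves t)%nat.
Proof. induction t; [cbn; lia | rewrite nleaves_Node; lia]. Qed.

Lemma depth_lt_nleaves i t : memb i t = true -> (depth t i < nleaves t)%nat.
Proof.
  induction t as [a|l1 t1 IH1 l2 t2 IH2]; intros H; [cbn; lia|].
  rewrite nleaves_Node. pose proof (nleaves_pos t1). pose proof (nleaves_pos t2).
  cbn [depth]. rewrite memb_Node in H.
  destruct (memb i t1); [specialize (IH1 eq_refl); lia|].
  destruct (memb i t2); [specialize (IH2 eq_refl); lia | discriminate].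
Qed.

Lemma depth_eq0_nleaves i t : memb i t = true -> depth t i = 0%nat -> nleaves t = 1%nat.
Proof.
  destruct t as [a|l1 t1 l2 t2]; intros H D; [reflexivity|].
  rewrite memb_Node in H. cbn [depth] in D.
  destruct (memb i t1); [discriminate|]. destruct (memb i t2); discriminate.
Qed.

Lemma path_sum_le (g : nat -> nat -> R) (C : R) (n : nat) :
  (forall k m, (k < m < n)%nat -> (k = 0 -> m = 1)%nat -> g k m <= C) ->
  forall t i, pos_lengths t -> (nleaves t <= n)%nat ->
  path_sum g t i <= C * path_length t i.
Proof.
  intros Hg t i. induction t as [a|l1 t1 IH1 l2 t2 IH2]; intros Hpos Hn; cbn; [lra|].
  destruct Hpos as (p1 & P1 & p2 & P2). rewrite nleaves_Node in Hn.
  pose proof (nleaves_pos t1). pose proof (nleaves_pos t2).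
  destruct (memb i t1) eqn:E1.
  - assert (g (depth t1 i) (nleaves t1) <= C).
    { apply Hg; [pose proof (depth_lt_nleaves i t1 E1); lia | apply depth_eq0_nleaves; exact E1]. }
    specialize (IH1 P1 ltac:(lia)). nra.
  - destruct (memb i t2) eqn:E2; [|lra].
    assert (g (depth t2 i) (nleaves t2) <= C).
    { apply Hg; [pose proof (depth_lt_nleaves i t2 E2); lia | apply depth_eq0_nleaves; exact E2]. }
    specialize (IH2 P2 ltac:(lia)). nra.
Qed.

Lemma total_length_nonneg t : pos_lengths t -> 0 <= total_length t.
Proof.
  induction t as [a|l1 t1 IH1 l2 t2 IH2]; cbn; [lra|].
  intros (p1 & P1 & p2 & P2). specialize (IH1 P1). specialize (IH2 P2). lra.
Qed.

Lemma path_length_le_total t i : pos_lengths t -> path_length t i <= total_length t.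
Proof.
  induction t as [a|l1 t1 IH1 l2 t2 IH2]; cbn; [lra|]. intros (p1 & P1 & p2 & P2).
  pose proof (total_length_nonneg t1 P1). pose proof (total_length_nonneg t2 P2).
  specialize (IH1 P1). specialize (IH2 P2).
  destruct (memb i t1); [lra|]. destruct (memb i t2); lra.
Qed.

Lemma leaves_nonempty t : exists j, In j (leaves t).
Proof.
  induction t as [a|l1 t1 [j Hj] l2 t2 _]; cbn; [exists a; auto|].
  exists j. apply in_or_app. auto.
Qed.

Lemma NoDup_app_disjoint (A : Type) (l1 l2 : list A) a :
  NoDup (l1 ++ l2) -> In a l1 -> ~ In a l2.
Proof.
  intros ND H1 H2. destruct (in_split a l1 H1) as (u & v & ->).
  rewrite <- app_assoc in ND. apply NoDup_remove_2 in ND.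
  apply ND, in_or_app. right. apply in_or_app. auto.
Qed.

(* Paths to two leaves on different sides of the root share no edge. *)
Lemma path_length_add_le_total l1 t1 l2 t2 i j :
  pos_lengths (Node l1 t1 l2 t2) -> NoDup (leaves (Node l1 t1 l2 t2)) ->
  In i (leaves t1) -> In j (leaves t2) ->
  path_length (Node l1 t1 l2 t2) i + path_length (Node l1 t1 l2 t2) j
  <= total_length (Node l1 t1 l2 t2).
Proof.
  intros P ND Hi Hj. pose proof P as (p1 & P1 & p2 & P2).
  assert (Ej1 : memb j t1 = false).
  { apply not_true_iff_false. rewrite memb_true_iff. intros Hj1.
    exact (NoDup_app_disjoint _ _ _ _ ND Hj1 Hj). }
  apply memb_true_iff in Hi, Hj. cbn. rewrite Hi, Ej1, Hj.
  pose proof (path_length_le_total t1 i P1). pose proof (path_length_le_total t2 j P2).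
  lra.
Qed.

Lemma MC_path_length_le_half t i :
  pos_lengths t -> NoDup (leaves t) -> MC t -> In i (leaves t) ->
  2 * path_length t i <= total_length t.
Proof.
  destruct t as [a|l1 t1 l2 t2]; intros P ND Hmc Hi; [cbn; lra|].
  rewrite <- Rplus_diag.
  cbn [leaves] in Hi. apply in_app_or in Hi as [Hi|Hi].
  - destruct (leaves_nonempty t2) as [j Hj].
    rewrite (Hmc i j) at 2 by (cbn; apply in_or_app; auto).
    exact (path_length_add_le_total _ _ _ _ i j P ND Hi Hj).
  - destruct (leaves_nonempty t1) as [j Hj].
    rewrite (Hmc i j) at 1 by (cbn; apply in_or_app; auto).
    exact (path_length_add_le_total _ _ _ _ j i P ND Hj Hi).
Qed.

Lemma path_length_le_budget (mc : bool) n L t i :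
  leaf_set_is n t -> In i (seq 1 n) -> pos_lengths t -> total_length t = L ->
  (if mc then MC t else True) ->
  path_length t i <= (if mc then L / 2 else L).
Proof.
  intros Hl Hi P Ht Hmc. rewrite <- Ht. destruct mc.
  - pose proof (Permutation_NoDup (Permutation_sym Hl) (seq_NoDup n 1)) as ND.
    pose proof (Permutation_in _ (Permutation_sym Hl) Hi) as Hit.
    pose proof (MC_path_length_le_half t i P ND Hmc Hit). lra.
  - exact (path_length_le_total t i P).
Qed.

Lemma values_le (f : ltree -> nat -> R) (g : nat -> nat -> R) (C : R) (mc : bool) n L :
  0 <= C ->
  (forall k m, (k < m < n)%nat -> (k = 0 -> m = 1)%nat -> g k m <= C) ->
  (forall t i, f t i = path_sum g t i) ->
  forall x, values f mc n L x -> x <= C * (if mc then L / 2 else L).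
Proof.
  intros HC Hg Hf x (t & i & Hl & Hi & P & Ht & Hmc & ->).
  assert (Hn : nleaves t = n) by (unfold nleaves; rewrite (Permutation_length Hl); apply length_seq).
  rewrite Hf. eapply Rle_trans; [apply (path_sum_le g C n Hg t i P); lia|].
  apply Rmult_le_compat_l; [exact HC|].
  exact (path_length_le_budget mc n L t i Hl Hi P Ht Hmc).
Qed.

Lemma INR_succ_le_pow2 k : INR (S k) <= 2 ^ k.
Proof.
  induction k; [simpl; lra|]. rewrite S_INR. cbn [pow].
  pose proof (S_INR k). pose proof (pos_INR k). lra.
Qed.

Lemma inv_le_inv_INR (a b : nat) : (0 < a <= b)%nat -> 1 / INR b <= 1 / INR a.
Proof.
  intros H. unfold Rdiv. rewrite !Rmult_1_l.
  apply Rinv_le_contravar; [apply lt_0_INR | apply le_INR]; lia.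
Qed.

Lemma fp_es_peak_nonneg k : 0 <= fp_es_coef k (S k).
Proof.
  unfold fp_es_coef, Rdiv. rewrite !Rmult_1_l.
  assert (/ 2 ^ k <= / INR (S k))
    by (apply Rinv_le_contravar; [apply lt_0_INR; lia | apply INR_succ_le_pow2]).
  lra.
Qed.

Lemma fp_es_coef_le_peak k m : (k < m)%nat -> fp_es_coef k m <= fp_es_coef k (S k).
Proof.
  intros H. unfold fp_es_coef. pose proof (inv_le_inv_INR (S k) m ltac:(lia)). lra.
Qed.

(* The peak 1/(k+1) - 1/2^k is largest at k = 4. *)
Lemma fp_es_peak_le k : fp_es_coef k (S k) <= 11 / 80.
Proof.
  do 7 (destruct k as [|k]; [unfold fp_es_coef; simpl; lra|]).
  unfold fp_es_coef. pose proof (inv_le_inv_INR 8 (7 + S k) ltac:(lia)).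
  assert (0 < 1 / 2 ^ (7 + k)) by (apply Rdiv_lt_0_compat; [lra | apply pow_lt; lra]).
  simpl plus in *. replace (INR 8) with 8 in * by (simpl; lra). lra.
Qed.

Lemma fp_es_peak_le_lambda n k : (k + 2 <= n)%nat -> fp_es_coef k (S k) <= lambda n.
Proof.
  intros H. pose proof (fp_es_peak_le k).
  destruct n as [|[|[|[|[|[|n]]]]]]; try lia; cbn [lambda]; try lra;
  destruct k as [|[|[|[|k]]]]; try lia; unfold fp_es_coef; simpl; lra.
Qed.

Lemma lambda_attained n : (2 <= n)%nat ->
  exists k m, n = (S (S k) + m)%nat /\ fp_es_coef k (S k) = lambda n.
Proof.
  intros Hn. destruct n as [|[|[|[|[|[|p]]]]]]; try lia;
  [exists 0%nat, 0%nat | exists 1%nat, 0%nat | exists 2%nat, 0%nat | exists 3%nat, 0%nat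
  | exists 4%nat, p]; (split; [reflexivity | unfold fp_es_coef; simpl; lra]).
Qed.

Lemma fp_es_coef_le_lambda n k m : (k < m < n)%nat -> fp_es_coef k m <= lambda n.
Proof.
  intros H. eapply Rle_trans; [apply fp_es_coef_le_peak | apply fp_es_peak_le_lambda]; lia.
Qed.

Lemma es_fp_bound_eq m : 1 / 2 - 1 / (INR (S (S (S m))) - 1) = es_fp_coef 1 (S (S m)).
Proof.
  unfold es_fp_coef. rewrite (S_INR (S (S m))), pow_1.
  replace (INR (S (S m)) + 1 - 1) with (INR (S (S m))) by ring. reflexivity.
Qed.

Lemma es_fp_bound_nonneg n : (3 <= n)%nat -> 0 <= 1 / 2 - 1 / (INR n - 1).
Proof.
  intros Hn. destruct n as [|[|[|m]]]; try lia. rewrite es_fp_bound_eq.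
  unfold es_fp_coef. pose proof (inv_le_inv_INR 2 (S (S m)) ltac:(lia)). simpl in *. lra.
Qed.

Lemma es_fp_coef_le n k m : (3 <= n)%nat -> (k < m < n)%nat -> (k = 0 -> m = 1)%nat ->
  es_fp_coef k m <= 1 / 2 - 1 / (INR n - 1).
Proof.
  intros Hn Hkm H0. pose proof (es_fp_bound_nonneg n Hn).
  destruct k as [|k].
  - rewrite H0 by reflexivity. unfold es_fp_coef. simpl. lra.
  - destruct n as [|[|[|p]]]; try lia. rewrite es_fp_bound_eq. unfold es_fp_coef.
    pose proof (inv_le_inv_INR m (S (S p)) ltac:(lia)).
    pose proof (inv_le_inv_INR 2 (S (S k)) ltac:(lia)).
    pose proof (INR_succ_le_pow2 (S k)).
    assert (1 / 2 ^ S k <= 1 / INR (S (S k))).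
    { unfold Rdiv. rewrite !Rmult_1_l. apply Rinv_le_contravar; [apply lt_0_INR; lia | lra]. }
    simpl in *. lra.
Qed.

Lemma is_lub_of_approx (S : R -> Prop) (c M K : R) :
  0 <= c -> 0 < M -> 0 < K ->
  (forall x, S x -> x <= c * M) ->
  (forall e, 0 < e -> e * K < M -> exists x, S x /\ c * (M - e * K) <= x) ->
  is_lub S (c * M).
Proof.
  intros Hc HM HK Hub Happrox. split; [exact Hub|].
  intros b Hb. apply Rnot_lt_le. intros Hlt.
  set (d := Rmin (M / 2) ((c * M - b) / (2 * (c + 1)))).
  assert (Hd : 0 < d) by (apply Rmin_glb_lt; apply Rdiv_lt_0_compat; lra).
  assert (Hd1 : d <= M / 2) by apply Rmin_l.
  assert (Hd2 : d * (2 * (c + 1)) <= c * M - b).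
  { apply (Rmult_le_reg_r (/ (2 * (c + 1)))); [apply Rinv_0_lt_compat; lra|].
    rewrite Rmult_assoc, Rinv_r, Rmult_1_r by lra. exact (Rmin_r _ _). }
  destruct (Happrox (d / K)) as (x & Sx & Hx).
  - apply Rdiv_lt_0_compat; lra.
  - unfold Rdiv. rewrite Rmult_assoc, Rinv_l by lra. lra.
  - replace (d / K * K) with d in Hx by (field; lra).
    pose proof (Hb x Sx). nra.
Qed.

Fixpoint caterpillar (e : R) (i n : nat) : ltree :=
  match n with
  | O => Leaf i
  | S p => Node e (caterpillar e i p) (e * INR n) (Leaf (i + n))
  end.

Lemma caterpillar_leaves e i n : leaves (caterpillar e i n) = seq i (S n).
Proof. induction n; cbn [caterpillar leaves]; [reflexivity|]. rewrite IHn, (seq_S (S n)). reflexivity. Qed.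

Lemma caterpillar_memb e i n : memb i (caterpillar e i n) = true.
Proof. apply memb_true_iff. rewrite caterpillar_leaves. now left. Qed.

Lemma caterpillar_nleaves e i n : nleaves (caterpillar e i n) = S n.
Proof. unfold nleaves. rewrite caterpillar_leaves. apply length_seq. Qed.

Lemma caterpillar_depth e i n : depth (caterpillar e i n) i = n.
Proof. induction n; cbn [caterpillar depth]; [reflexivity|]. now rewrite caterpillar_memb, IHn. Qed.

Lemma caterpillar_pos_lengths e i n : 0 < e -> pos_lengths (caterpillar e i n).
Proof.
  intros He. induction n; cbn [caterpillar pos_lengths]; [exact I|].
  repeat split; auto. apply Rmult_lt_0_compat; [lra | apply lt_0_INR; lia].
Qed.

Lemma caterpillar_total_length e i n :
  total_length (caterpillar e i n) = e * total_length (caterpillar 1 i n).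
Proof. induction n; cbn [caterpillar total_length]; [ring|]. rewrite IHn. ring. Qed.

Lemma caterpillar_path_sum_nonneg (g : nat -> nat -> R) e i n :
  (forall k, 0 <= g k (S k)) -> 0 <= e -> 0 <= path_sum g (caterpillar e i n) i.
Proof.
  intros Hg He. induction n; cbn [caterpillar path_sum]; [lra|].
  rewrite caterpillar_memb, caterpillar_depth, caterpillar_nleaves.
  pose proof (Hg n). nra.
Qed.

Definition has_height (t : ltree) (h : R) : Prop :=
  forall j, In j (leaves t) -> path_length t j = h.

Lemma has_height_MC t h : has_height t h -> MC t.
Proof. intros H i j Hi Hj. now rewrite !H. Qed.

Lemma has_height_Leaf a : has_height (Leaf a) 0.
Proof. intros j _. reflexivity. Qed.

Lemma has_height_Node l1 t1 h1 l2 t2 h2 h :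
  has_height t1 h1 -> has_height t2 h2 -> l1 + h1 = h -> l2 + h2 = h ->
  has_height (Node l1 t1 l2 t2) h.
Proof.
  intros H1 H2 E1 E2 j Hj. cbn [leaves] in Hj. cbn [path_length].
  destruct (memb j t1) eqn:M1; [rewrite H1; [exact E1 | now apply memb_true_iff]|].
  apply in_app_or in Hj as [Hj|Hj]; [apply memb_true_iff in Hj; congruence|].
  replace (memb j t2) with true by (symmetry; now apply memb_true_iff).
  now rewrite H2.
Qed.

Lemma caterpillar_has_height e i n : has_height (caterpillar e i n) (e * INR n).
Proof.
  induction n; cbn [caterpillar].
  - rewrite Rmult_0_r. apply has_height_Leaf.
  - apply (has_height_Node _ _ _ _ _ _ _ IHn (has_height_Leaf _)); rewrite ?S_INR; ring.
Qed.

Lemma lambda_nonneg n : 0 <= lambda n.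
Proof. destruct n as [|[|[|[|[|[|n]]]]]]; cbn [lambda]; lra. Qed.

Lemma FPminusES_values_le (mc : bool) n L :
  forall x, values FPminusES mc n L x -> x <= lambda n * (if mc then L / 2 else L).
Proof.
  apply (values_le _ fp_es_coef _ mc n L (lambda_nonneg n)).
  - intros k m Hkm _. now apply fp_es_coef_le_lambda.
  - apply FPminusES_path_sum.
Qed.

Lemma ESminusFP_values_le (mc : bool) n L : (3 <= n)%nat ->
  forall x, values ESminusFP mc n L x ->
  x <= (1 / 2 - 1 / (INR n - 1)) * (if mc then L / 2 else L).
Proof.
  intros Hn. apply (values_le _ es_fp_coef _ mc n L (es_fp_bound_nonneg n Hn)).
  - intros k m. now apply es_fp_coef_le.
  - apply ESminusFP_path_sum.
Qed.

(* Leaf 1 lies at depth k in a caterpillar with k + 1 leaves; the edge of length x above it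
   has coefficient 1/(k+1) - 1/2^k, the value of lambda when k is chosen as in
   [lambda_attained]. *)
Definition fp_es_witness (x y e : R) (k m : nat) : ltree :=
  Node x (caterpillar e 1 k) y (caterpillar e (S (S k)) m).

Lemma fp_es_witness_leaves x y e k m : leaf_set_is (S (S k) + m) (fp_es_witness x y e k m).
Proof.
  unfold leaf_set_is, fp_es_witness. cbn [leaves]. rewrite !caterpillar_leaves.
  replace (S (S k) + m)%nat with (S k + S m)%nat by lia. rewrite seq_app.
  apply Permutation_refl.
Qed.

Lemma fp_es_witness_value x y e k m : 0 <= e ->
  x * fp_es_coef k (S k) <= FPminusES (fp_es_witness x y e k m) 1.
Proof.
  intros He. rewrite FPminusES_path_sum. unfold fp_es_witness. cbn [path_sum].
  rewrite caterpillar_memb, caterpillar_depth, caterpillar_nleaves.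
  pose proof (caterpillar_path_sum_nonneg _ e 1 k fp_es_peak_nonneg He). lra.
Qed.

Lemma is_lub_FPminusES n L : (2 <= n)%nat -> 0 < L ->
  is_lub (values FPminusES false n L) (lambda n * L).
Proof.
  intros Hn HL. destruct (lambda_attained n Hn) as (k & m & -> & Hk).
  pose proof (total_length_nonneg _ (caterpillar_pos_lengths 1 1 k Rlt_0_1)).
  pose proof (total_length_nonneg _ (caterpillar_pos_lengths 1 (S (S k)) m Rlt_0_1)).
  set (A := total_length (caterpillar 1 1 k)) in *.
  set (B := total_length (caterpillar 1 (S (S k)) m)) in *.
  apply (is_lub_of_approx _ _ _ (1 + A + B) (lambda_nonneg _) HL); [lra | apply FPminusES_values_le|].
  intros e He HeK. set (x := L - e * (1 + A + B)).
  exists (FPminusES (fp_es_witness x e e k m) 1). split.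
  - exists (fp_es_witness x e e k m), 1%nat.
    split; [apply fp_es_witness_leaves|]. split; [now left|].
    split; [cbn; repeat split; auto using caterpillar_pos_lengths; unfold x; lra|].
    split; [cbn [fp_es_witness total_length]; rewrite !(caterpillar_total_length e); unfold x, A, B; ring|].
    split; [exact I | reflexivity].
  - rewrite <- Hk, Rmult_comm. exact (fp_es_witness_value x e e k m (Rlt_le _ _ He)).
Qed.

Lemma is_lub_FPminusES_MC n L : (2 <= n)%nat -> 0 < L ->
  is_lub (values FPminusES true n L) (lambda n * (L / 2)).
Proof.
  intros Hn HL. destruct (lambda_attained n Hn) as (k & m & -> & Hk).
  pose proof (total_length_nonneg _ (caterpillar_pos_lengths 1 1 k Rlt_0_1)).
  pose proof (total_length_nonneg _ (caterpillar_pos_lengths 1 (S (S k)) m Rlt_0_1)).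
  set (A := total_length (caterpillar 1 1 k)) in *.
  set (B := total_length (caterpillar 1 (S (S k)) m)) in *.
  pose proof (pos_INR k). pose proof (pos_INR m).
  set (K := 1 + A + B + INR k + INR m).
  apply (is_lub_of_approx _ _ _ K (lambda_nonneg _)); [lra | unfold K; lra | apply FPminusES_values_le|].
  intros e He HeK.
  (* the two root edges compensate the heights e k and e m of the caterpillars *)
  set (x := (L - e * (A + B) - e * INR k + e * INR m) / 2).
  set (y := (L - e * (A + B) + e * INR k - e * INR m) / 2).
  assert (Hx : L / 2 - e * K <= x) by (unfold x, K; nra).
  assert (Hy : 0 < y) by (unfold y, K in *; nra).
  exists (FPminusES (fp_es_witness x y e k m) 1). split.
  - exists (fp_es_witness x y e k m), 1%nat.
    split; [apply fp_es_witness_leaves|]. split; [now left|].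
    split; [cbn; repeat split; auto using caterpillar_pos_lengths; lra|].
    split; [cbn [fp_es_witness total_length]; rewrite !(caterpillar_total_length e); unfold x, y, A, B; field|].
    split; [|reflexivity].
    apply (has_height_MC _ (x + e * INR k)).
    apply (has_height_Node _ _ _ _ _ _ _ (caterpillar_has_height e 1 k)
             (caterpillar_has_height e (S (S k)) m)); unfold x, y; field.
  - rewrite <- Hk. eapply Rle_trans; [|exact (fp_es_witness_value x y e k m (Rlt_le _ _ He))].
    rewrite Rmult_comm. apply Rmult_le_compat_r; [apply fp_es_peak_nonneg | exact Hx].
Qed.

(* Leaf 2 lies at depth 1 below the edge of length x, whose subtree has all leaves but 1;
   that edge has coefficient 1/2 - 1/(n-1) and the edge above leaf 2 has coefficient 0. *)
Definition es_fp_witness (x y e : R) (m : nat) : ltree :=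
  Node y (Leaf 1) x (Node (e * INR (S m)) (Leaf 2) e (caterpillar e 3 m)).

Lemma es_fp_witness_leaves x y e m : leaf_set_is (S (S (S m))) (es_fp_witness x y e m).
Proof.
  unfold leaf_set_is, es_fp_witness. cbn [leaves]. rewrite caterpillar_leaves.
  apply Permutation_refl.
Qed.

Lemma es_fp_witness_value x y e m :
  ESminusFP (es_fp_witness x y e m) 2 = x * es_fp_coef 1 (S (S m)).
Proof.
  rewrite ESminusFP_path_sum. unfold es_fp_witness. cbn -[INR].
  unfold nleaves. cbn [leaves length]. rewrite caterpillar_leaves, length_seq.
  unfold es_fp_coef. change (INR 1) with 1. rewrite pow_O, Rminus_diag. ring.
Qed.

Lemma is_lub_ESminusFP n L : (3 <= n)%nat -> 0 < L ->
  is_lub (values ESminusFP false n L) ((1 / 2 - 1 / (INR n - 1)) * L).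
Proof.
  intros Hn HL. pose proof (es_fp_bound_nonneg n Hn) as Hc.
  destruct n as [|[|[|m]]]; try lia.
  pose proof (total_length_nonneg _ (caterpillar_pos_lengths 1 3 m Rlt_0_1)).
  set (C := total_length (caterpillar 1 3 m)) in *.
  pose proof (pos_INR (S m)).
  set (K := 2 + INR (S m) + C).
  apply (is_lub_of_approx _ _ _ K Hc HL); [unfold K; lra | apply ESminusFP_values_le; lia|].
  intros e He HeK. set (x := L - e * K).
  assert (Hem : 0 < e * INR (S m)) by (apply Rmult_lt_0_compat; [lra | apply lt_0_INR; lia]).
  exists (ESminusFP (es_fp_witness x e e m) 2). split.
  - exists (es_fp_witness x e e m), 2%nat.
    split; [apply es_fp_witness_leaves|]. split; [right; now left|].
    split; [cbn; repeat split; auto using caterpillar_pos_lengths; unfold x; lra|].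
    split; [cbn [es_fp_witness total_length]; rewrite (caterpillar_total_length e); unfold x, K, C; ring|].
    split; [exact I | reflexivity].
  - rewrite es_fp_witness_value, es_fp_bound_eq, Rmult_comm. apply Rle_refl.
Qed.

Lemma is_lub_ESminusFP_MC n L : (3 <= n)%nat -> 0 < L ->
  is_lub (values ESminusFP true n L) ((1 / 2 - 1 / (INR n - 1)) * (L / 2)).
Proof.
  intros Hn HL. pose proof (es_fp_bound_nonneg n Hn) as Hc.
  destruct n as [|[|[|m]]]; try lia.
  pose proof (total_length_nonneg _ (caterpillar_pos_lengths 1 3 m Rlt_0_1)).
  set (C := total_length (caterpillar 1 3 m)) in *.
  pose proof (pos_INR (S m)).
  set (K := 1 + 2 * INR (S m) + C).
  apply (is_lub_of_approx _ _ _ K Hc); [lra | unfold K; lra | apply ESminusFP_values_le; lia|].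
  intros e He HeK.
  (* the root edge above leaf 1 compensates the height e (m + 1) of the other side *)
  set (x := (L - e * K) / 2).
  set (y := x + e * INR (S m)).
  assert (0 < e * K) by (apply Rmult_lt_0_compat; unfold K; lra).
  assert (Hx : L / 2 - e * K <= x) by (unfold x; lra).
  assert (Hem : 0 < e * INR (S m)) by (apply Rmult_lt_0_compat; [lra | apply lt_0_INR; lia]).
  exists (ESminusFP (es_fp_witness x y e m) 2). split.
  - exists (es_fp_witness x y e m), 2%nat.
    split; [apply es_fp_witness_leaves|]. split; [right; now left|].
    split; [cbn; repeat split; auto using caterpillar_pos_lengths; unfold y, x; lra|].
    split; [cbn [es_fp_witness total_length]; rewrite (caterpillar_total_length e); unfold y, x, K, C; field|].
    split; [|reflexivity].
    apply (has_height_MC _ y).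
    eapply has_height_Node; [apply has_height_Leaf | | unfold y; ring | reflexivity].
    eapply has_height_Node; [apply has_height_Leaf | apply caterpillar_has_height | |];
      rewrite ?S_INR; ring.
  - rewrite es_fp_witness_value, es_fp_bound_eq, Rmult_comm.
    apply Rmult_le_compat_r; [rewrite <- es_fp_bound_eq; exact Hc | exact Hx].
Qed.

Theorem theorem3 (L : R) (HL : 0 < L) :
  (forall n : nat, (2 <= n)%nat ->
     is_lub (values FPminusES false n L) (lambda n * L)) /\
  (forall n : nat, (3 <= n)%nat ->
     is_lub (values ESminusFP false n L) ((1 / 2 - 1 / (INR n - 1)) * L)) /\
  (forall n : nat, (2 <= n)%nat ->
     is_lub (values FPminusES true n L) (lambda n * (L / 2))) /\
  (forall n : nat, (3 <= n)%nat ->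
     is_lub (values ESminusFP true n L) ((1 / 2 - 1 / (INR n - 1)) * (L / 2))).
Proof.
  split; [|split; [|split]]; intros n Hn.
  - exact (is_lub_FPminusES n L Hn HL).
  - exact (is_lub_ESminusFP n L Hn HL).
  - exact (is_lub_FPminusES_MC n L Hn HL).
  - exact (is_lub_ESminusFP_MC n L Hn HL).
Qed.
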